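(* Let $n\ge 3$ and let $(\alpha,\beta)$ satisfy $\beta\ge 0$, $0<\alpha+\beta<n-\beta$ and $\frac{n-\alpha-2\beta}{2n}+\frac{n-\alpha}{2(n-1)}<1$. Then, as $|\xi|\to1^-$ (i.e. for all $\xi\in\mathbb B^n$ with $|\xi|$ sufficiently close to $1$, with a constant depending only on $n,\alpha,\beta$), $$d_{\alpha,\beta}(\xi)\lesssim\begin{cases}(1-|\xi|)^\beta,&\alpha>1,\\ (1-|\xi|)^\beta\log\frac1{1-|\xi|},&\alpha=1,\\ (1-|\xi|)^{\alpha+\beta-1},&\alpha<1.\end{cases}$$
   Context: $d_{\alpha,\beta}(\xi)=\frac{\pi^{n/2}2^{1-\beta}}{\Gamma(n/2)}(1-|\xi|^2)^{\alpha+\beta-1}F\big(\frac{n+\alpha}{2}-1,\frac\alpha2;\frac n2;|\xi|^2\big)$ for $\xi$ in the open unit ball $\mathbb B^n$, where $F$ is the Gauss hypergeometric function; equivalently $d_{\alpha,\beta}(\xi)=\left(\frac{1-|\xi|^2}{2}\right)^\beta\int_{\mathbb S^{n-1}}|\xi-\eta|^{\alpha-n}\mathrm dV(\eta)$. *)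

From HB Require Import structures.
From mathcomp Require Import all_boot all_order all_algebra.
From mathcomp Require Import all_classical all_reals all_analysis.
Set Implicit Arguments. Unset Strict Implicit. Unset Printing Implicit Defensive.
Import Order.TTheory GRing.Theory Num.Theory.
Import numFieldNormedType.Exports.
Local Open Scope classical_set_scope.
Local Open Scope ring_scope.

Definition Gamma {R : realType} (s : R) : R :=
  Rintegral (@lebesgue_measure R) `]0, +oo[%classic
    (fun t : R => t `^ (s - 1) * expR (- t)).

Definition poch {R : realType} (a : R) (k : nat) : R :=
  \prod_(i < k) (a + i%:R).

Definition hypF {R : realType} (a b c x : R) : R :=
  limn (series (fun k : nat => poch a k * poch b k / (poch c k * (k`!)%:R) * x ^+ k)).

Definition enorm {R : realType} {n : nat} (xi : 'rV[R]_n) : R :=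
  Num.sqrt (\sum_(i < n) xi 0 i ^+ 2).

Definition d_ab {R : realType} (n : nat) (alpha beta : R) (xi : 'rV[R]_n) : R :=
  pi `^ (n%:R / 2) * 2 `^ (1 - beta) / Gamma (n%:R / 2 : R)
  * (1 - enorm xi ^+ 2) `^ (alpha + beta - 1)
  * hypF ((n%:R + alpha) / 2 - 1) (alpha / 2) (n%:R / 2) (enorm xi ^+ 2).
Arguments d_ab {R} n alpha beta xi.

(* With x = |xi|^2, d_{alpha,beta}(xi) is a positive constant times
   (1 - x)^(alpha+beta-1) F(a, b; c; x), where a = (n+alpha)/2 - 1, b = alpha/2 and
   c = n/2, so that a + b - c = alpha - 1.  The ratio (a+k)(b+k)/((c+k)(k+1)) of
   consecutive Taylor coefficients of F agrees, up to a factor 1 + O(k^-2), with the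
   ratio of the coefficients of (1 - x)^(1-alpha) when alpha > 1, of -log(1 - x)/x when
   alpha = 1, and of the summable Beta numbers B(k+1, 2-alpha) when alpha < 1.  Hence the
   coefficients of F are dominated by those of the comparison series, and F is bounded
   by a multiple of (1 - x)^(1-alpha), -log(1 - x)/x, resp. 1.  Finally
   1 - |xi| <= 1 - x <= 2 (1 - |xi|) turns powers of 1 - x into powers of 1 - |xi|. *)

From HB Require Import structures.
From mathcomp Require Import all_boot all_order all_algebra.
From mathcomp Require Import all_classical all_reals all_analysis.
From mathcomp Require Import ring lra.
Import Order.TTheory GRing.Theory Num.Theory.
Import numFieldNormedType.Exports.
Set Implicit Arguments. Unset Strict Implicit. Unset Printing Implicit Defensive.
Local Open Scope classical_set_scope.
Local Open Scope ring_scope.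

Section pochhammer.
Context {R : realType}.
Implicit Types (a : R) (k : nat).

Lemma natr_fact_neq0 k : k`!%:R != 0 :> R.
Proof. by rewrite pnatr_eq0 -lt0n fact_gt0. Qed.

Lemma pochS a k : poch a k.+1 = poch a k * (a + k%:R).
Proof. by rewrite /poch big_ord_recr. Qed.

Lemma poch_ge0 a k : 0 <= a -> 0 <= poch a k.
Proof. by move=> a0; apply: prodr_ge0 => i _; rewrite addr_ge0. Qed.

Lemma poch_gt0 a k : 0 < a -> 0 < poch a k.
Proof. by move=> a0; apply: prodr_gt0 => i _; rewrite ltr_wpDr. Qed.

Lemma poch1 k : poch (1 : R) k = k`!%:R.
Proof.
elim: k => [|k IH]; first by rewrite /poch big_ord0.
by rewrite pochS IH factS natrM mulrC addrC natr1.
Qed.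

End pochhammer.

Section derivatives.
Context {R : realType}.

Lemma is_derive_monomial (c : R) (m : nat) (x : R) :
  is_derive x 1 (fun z => c * z ^+ m) (c * (m%:R * x ^+ m.-1)).
Proof.
have -> : (fun z => c * z ^+ m) = horner (c *: 'X^m).
  by apply/funext => z; rewrite hornerZ hornerXn.
apply: is_derive_eq.
by rewrite derivZ derivXn hornerZ hornerMn hornerXn mulr_natl.
Qed.

Lemma is_derive_1_sub (x : R) : is_derive x 1 (fun z : R => 1 - z) (-1).
Proof. by apply: is_derive_eq; rewrite add0r mul1r. Qed.

Lemma is_derive_powR_1_sub (p y : R) : y < 1 ->
  is_derive y 1 (fun z => (1 - z) `^ p) (- (p * (1 - y) `^ (p - 1))).
Proof.
move=> y1; have dp : is_derive (1 - y) 1 (@powR R ^~ p) (p * (1 - y) `^ (p - 1)).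
  by apply: is_derive1_powR; rewrite subr_gt0.
by have := is_derive1_comp (g := fun z => 1 - z) dp (is_derive_1_sub y); rewrite mulrN1.
Qed.

Lemma is_derive_ln_1_sub (y : R) : y < 1 ->
  is_derive y 1 (fun z => ln (1 - z)) (- (1 - y)^-1).
Proof.
move=> y1; have dl : is_derive (1 - y) 1 (@ln R) (1 - y)^-1.
  by apply: is_derive1_ln; rewrite subr_gt0.
by have := is_derive1_comp (g := fun z => 1 - z) dl (is_derive_1_sub y); rewrite mulrN1.
Qed.

Lemma is_derive_ler0_le (f df : R -> R) (a b : R) : a <= b ->
  (forall y, a <= y <= b -> is_derive y 1 f (df y)) ->
  (forall y, a < y < b -> df y <= 0) -> f b <= f a.
Proof.
move=> ab fd df_le0.
have fc : {within `[a, b], continuous f}.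
  apply: derivable_within_continuous => y; rewrite in_itv /= => yab.
  by have [] := fd y yab.
apply: (ler0_derive1_le_cc _ _ fc); rewrite ?in_itv /= ?lexx ?ab //.
- move=> y; rewrite in_itv /= => /andP[ay yb].
  by have [] := fd y _; rewrite ?ltW.
- move=> y; rewrite in_itv /= => /andP[ay yb].
  by rewrite derive1E (@derive_val _ _ _ _ _ _ _ (fd y _)) ?df_le0 ?ay ?yb ?ltW.
Qed.

End derivatives.

Section negative_binomial_series.
Context {R : realType}.
Implicit Types (p x : R) (k N : nat).

(* Taylor coefficients of (1 - x)^(-p). *)
Definition negpow_coef p k := poch p k / k`!%:R.

Lemma negpow_coef0 p : negpow_coef p 0 = 1.
Proof. by rewrite /negpow_coef /poch big_ord0 divr1. Qed.

Lemma negpow_coef_ge0 p k : 0 <= p -> 0 <= negpow_coef p k.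
Proof. by move=> p0; rewrite divr_ge0 ?poch_ge0. Qed.

Lemma negpow_coef_gt0 p k : 0 < p -> 0 < negpow_coef p k.
Proof. by move=> p0; rewrite divr_gt0 ?poch_gt0 ?ltr0n ?fact_gt0. Qed.

Lemma negpow_coefS p k :
  negpow_coef p k.+1 = negpow_coef p k * ((p + k%:R) / k.+1%:R).
Proof.
rewrite /negpow_coef pochS factS natrM.
by field; rewrite natr_fact_neq0 addrC natr1 pnatr_eq0.
Qed.

Lemma is_derive_negpow_partial p N x :
  is_derive x 1 (fun z => \sum_(k < N.+1) negpow_coef p k * z ^+ k)
    (\sum_(k < N) negpow_coef p k * (p + k%:R) * x ^+ k).
Proof.
rewrite -fct_sumE.
apply: is_derive_eq; first by apply: is_derive_sum => k; exact: is_derive_monomial.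
rewrite big_ord_recl mul0r mulr0 add0r; apply: eq_bigr => k _.
rewrite negpow_coefS lift0 /=.
by field; rewrite addrC natr1 pnatr_eq0.
Qed.

(* The partial sums nearly solve (1 - x) y' = p y, of which (1 - x)^(-p) is a solution. *)
Lemma negpow_partial_ode p N x :
  (1 - x) * (\sum_(k < N) negpow_coef p k * (p + k%:R) * x ^+ k)
  - p * (\sum_(k < N.+1) negpow_coef p k * x ^+ k)
  = - (negpow_coef p N * (p + N%:R) * x ^+ N).
Proof.
elim: N => [|N IH]; first by rewrite big_ord0 big_ord1 negpow_coef0; ring.
rewrite big_ord_recr [in X in _ - X]big_ord_recr /= mulrDr [p * _]mulrDr.
rewrite opprD addrACA IH negpow_coefS exprS -natr1.
by field; rewrite natr1 pnatr_eq0.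
Qed.

Lemma negpow_partial_le p N x : 0 <= p -> 0 <= x < 1 ->
  \sum_(k < N) negpow_coef p k * x ^+ k <= (1 - x) `^ (- p).
Proof.
move=> p0 /andP[x0 x1]; case: N => [|N]; first by rewrite big_ord0 powR_ge0.
pose phi z := (1 - z) `^ p * \sum_(k < N.+1) negpow_coef p k * z ^+ k.
pose dphi y := (1 - y) `^ (p - 1) * - (negpow_coef p N * (p + N%:R) * y ^+ N).
have phi_derive (y : R) : y < 1 -> is_derive y 1 phi (dphi y).
  move=> y1; have := is_deriveM (is_derive_powR_1_sub p y1) (is_derive_negpow_partial p N y).
  have -> : (1 - y) `^ p = (1 - y) `^ (p - 1) * (1 - y).
    rewrite -[X in _ * X]powRr1 ?subr_ge0 ?ltW // -powRD ?subrK //.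
    by rewrite subr_eq0 (gt_eqF y1) implybT.
  rewrite /dphi -negpow_partial_ode => /is_derive_eq; apply.
  by rewrite /GRing.scale /=; ring.
have phi_le : phi x <= phi 0.
  apply: (@is_derive_ler0_le _ phi dphi 0 x x0) => [y /andP[_ yx]|y /andP[y0 _]].
    by apply: phi_derive; apply: le_lt_trans x1.
  have yN : 0 <= y ^+ N by rewrite exprn_ge0 ?ltW.
  rewrite /dphi mulrN oppr_le0 mulr_ge0 ?powR_ge0 // mulr_ge0 //.
  by rewrite mulr_ge0 ?negpow_coef_ge0 ?addr_ge0.
have phi0 : phi 0 = 1.
  rewrite /phi subr0 powR1 mul1r big_ord_recl big1 ?addr0 => [|k _].
    by rewrite negpow_coef0 expr0 mulr1.
  by rewrite expr0n mulr0.
have pos : 0 < (1 - x) `^ p by rewrite powR_gt0 // subr_gt0.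
by rewrite powRN -div1r ler_pdivlMr // mulrC -[X in _ <= X]phi0.
Qed.

End negative_binomial_series.

Lemma log_partial_le {R : realType} (N : nat) (x : R) : 0 <= x < 1 ->
  \sum_(k < N) k.+1%:R^-1 * x ^+ k.+1 <= - ln (1 - x).
Proof.
move=> /andP[x0 x1].
pose psi (z : R) := \sum_(k < N) k.+1%:R^-1 * z ^+ k.+1 + ln (1 - z).
pose dpsi (y : R) := \sum_(k < N) y ^+ k - (1 - y)^-1.
have psi_derive (y : R) : y < 1 -> is_derive y 1 psi (dpsi y).
  move=> y1; apply: is_deriveD (is_derive_ln_1_sub y1).
  rewrite -fct_sumE; apply: is_derive_eq.
    by apply: is_derive_sum => k; exact: is_derive_monomial.
  by apply: eq_bigr => k _; rewrite mulrA mulVf ?mul1r ?pnatr_eq0.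
have psi_le : psi x <= psi 0.
  apply: (@is_derive_ler0_le _ psi dpsi 0 x x0) => [y /andP[_ yx]|y /andP[y0 yx]].
    by apply: psi_derive; apply: le_lt_trans x1.
  have y1 : 0 < 1 - y by rewrite subr_gt0 (lt_trans yx).
  rewrite /dpsi subr_le0 -(ler_pM2l y1) mulfV ?gt_eqF //.
  have geo : (1 - y) * \sum_(k < N) y ^+ k = 1 - y ^+ N.
    by rewrite -opprB mulNr -subrX1 opprB.
  by rewrite geo gerBl exprn_ge0 ?ltW.
have psi0 : psi 0 = 0.
  by rewrite /psi subr0 ln1 addr0 big1 // => k _; rewrite expr0n mulr0.
by move: psi_le; rewrite psi0 /psi -lerBrDr sub0r.
Qed.

Section beta_coefficients.
Context {R : realType}.
Implicit Types (q : R) (k N : nat).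

(* The Beta integral B(k + 1, q + 1) = \int_0^1 t^k (1 - t)^q dt. *)
Definition beta_coef q k := k`!%:R / poch (1 + q) k.+1.

Lemma beta_coef_gt0 q k : 0 <= q -> 0 < beta_coef q k.
Proof. by move=> q0; rewrite divr_gt0 ?ltr0n ?fact_gt0 ?poch_gt0 ?ltr_pwDl. Qed.

Lemma beta_coefS q k : 0 <= q ->
  beta_coef q k.+1 = beta_coef q k * (k.+1%:R / (q + 2 + k%:R)).
Proof.
move=> q0; have k0 : 0 <= k%:R :> R := ler0n _ k.
rewrite /beta_coef !pochS factS natrM -!natr1.
by field; rewrite !gt_eqF ?poch_gt0 //; lra.
Qed.

Lemma beta_coef0 k : beta_coef 0 k = k.+1%:R^-1 :> R.
Proof.
rewrite /beta_coef addr0 poch1 factS natrM.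
by rewrite invfM mulrCA mulfV ?natr_fact_neq0 ?mulr1.
Qed.

Lemma sum_beta_coef_le q N : 0 < q -> \sum_(k < N) beta_coef q k <= q^-1.
Proof.
move=> q0; pose w k := k`!%:R / poch (1 + q) k / q.
have w_tel k : beta_coef q k = w k - w k.+1.
  have k0 : 0 <= k%:R :> R := ler0n _ k.
  rewrite /w /beta_coef !pochS factS natrM -natr1.
  by field; rewrite !gt_eqF ?poch_gt0 //; lra.
rewrite -(big_mkord xpredT (beta_coef q)) (telescope_sumr_eq (fun k => - w k)) //.
  have w0 : w 0 = q^-1 by rewrite /w /poch big_ord0 fact0 divr1 div1r.
  have wN : 0 <= w N by rewrite /w !divr_ge0 ?ltW // poch_gt0 //; lra.
  by rewrite opprK addrC w0 gerBl.
by move=> k _; rewrite w_tel opprK addrC.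
Qed.

End beta_coefficients.

(* [Phi k := `|u k| / e k * expR (D / k)] is eventually nonincreasing because
   [1 + D / (k (k + 1)) <= expR (D / k - D / (k + 1))]. *)
Lemma dominated_by_ratio {R : realType} (u e : nat -> R) (D : R) :
  (forall k, 0 < e k) -> 0 <= D ->
  (\forall k \near \oo,
    `|u k.+1| / e k.+1 <= `|u k| / e k * (1 + D / (k%:R * (k%:R + 1)))) ->
  exists M, 0 <= M /\ forall k, `|u k| <= M * e k.
Proof.
move=> e0 D0 [K _ uK].
pose Phi k := `|u k| / e k * expR (D / k%:R).
have Phi_ge0 k : 0 <= Phi k by rewrite mulr_ge0 ?divr_ge0 ?expR_ge0 // ltW.
have Phi_ge k : `|u k| / e k <= Phi k.
  by rewrite ler_peMr ?divr_ge0 ?(ltW (e0 k)) // -expR0 ler_expR divr_ge0.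
have PhiS k : (K < k)%N -> Phi k.+1 <= Phi k.
  move=> Kk; have k0 : 0 < k%:R :> R by rewrite ltr0n (leq_ltn_trans _ Kk).
  apply: le_trans (ler_wpM2r (expR_ge0 _) (uK k _)) _; first exact: ltnW.
  rewrite -[`|u k| / e k * _ * _]mulrA ler_wpM2l ?divr_ge0 ?(ltW (e0 k)) //.
  apply: le_trans (ler_wpM2r (expR_ge0 _) (expR_ge1Dx _)) _.
  rewrite -expRD -natr1 (_ : _ + _ = D / k%:R) //.
  by field; rewrite gt_eqF //= gt_eqF // ltr_wpDl // ltW.
have Phi_le k : (K < k)%N -> Phi k <= Phi K.+1.
  elim: k => // k IH; rewrite ltnS leq_eqVlt => /predU1P[<-//|Kk].
  exact: le_trans (PhiS k Kk) (IH Kk).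
exists (\sum_(j < K.+2) Phi j); split; first exact: sumr_ge0.
have Phi_sum j : (j < K.+2)%N -> Phi j <= \sum_(j < K.+2) Phi j.
  by move=> jK; rewrite (bigD1 (Ordinal jK)) //= lerDl sumr_ge0.
move=> k; rewrite -ler_pdivrMr //; apply: le_trans (Phi_ge k) _.
have [kK|Kk] := leqP k K.+1; first exact: Phi_sum.
by apply: le_trans (Phi_le k _) (Phi_sum _ _) => //; apply: ltn_trans Kk.
Qed.

Lemma ratio_le_1_add {R : realType} (num den E w t : R) :
  0 < t -> 0 <= E -> 0 < w ->
  t * (t + 1) * w <= den -> num <= den + E * w -> num / den <= 1 + E / (t * (t + 1)).
Proof.
move=> t0 E0 w0 den_ge num_le.
have tt0 : 0 < t * (t + 1) by rewrite mulr_gt0 // ltr_wpDr.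
have den0 : 0 < den by apply: lt_le_trans den_ge; rewrite mulr_gt0.
rewrite ler_pdivrMr // mulrDl mul1r; apply: le_trans num_le _; rewrite lerD2l.
by rewrite mulrAC ler_pdivlMr // -mulrA ler_wpM2l // mulrC.
Qed.

Section hypergeometric_coefficients.
Context {R : realType}.
Implicit Types (a b c p q D : R) (k : nat).

Definition hypF_coef a b c k := poch a k * poch b k / (poch c k * k`!%:R).

Lemma hypF_coef_normS a b c k : 0 < c -> 0 <= a + k%:R -> 0 <= b + k%:R ->
  `|hypF_coef a b c k.+1|
  = `|hypF_coef a b c k| * ((a + k%:R) * (b + k%:R) / ((c + k%:R) * (k%:R + 1))).
Proof.
move=> c0 ak bk; have k0 : 0 <= k%:R :> R := ler0n _ k.
have ratio0 : 0 <= (a + k%:R) * (b + k%:R) / ((c + k%:R) * (k%:R + 1)).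
  by rewrite divr_ge0 ?mulr_ge0 //; lra.
rewrite -[X in _ * X](ger0_norm ratio0) -normrM; congr `|_|.
rewrite /hypF_coef !pochS factS natrM -natr1.
by field; rewrite natr_fact_neq0 !gt_eqF ?poch_gt0 //; lra.
Qed.

Lemma hypF_coef_dominated a b c D (e : nat -> R) :
  0 < c -> (forall k, 0 < e k) -> 0 <= D ->
  (forall k, (0 < k)%N -> 0 <= a + k%:R -> 0 <= b + k%:R ->
    (a + k%:R) * (b + k%:R) / ((c + k%:R) * (k%:R + 1)) * (e k / e k.+1)
    <= 1 + D / (k%:R * (k%:R + 1))) ->
  exists M, 0 <= M /\ forall k, `|hypF_coef a b c k| <= M * e k.
Proof.
move=> c0 e0 D0 ratio; apply: (@dominated_by_ratio _ _ _ D) => //.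
have add_ge0 (r : R) : \forall k \near \oo, 0 <= r + k%:R.
  near=> k; suff : - r <= k%:R by lra.
  by near: k; exact: nbhs_infty_ger.
near=> k; rewrite hypF_coef_normS //; [|near: k; exact: add_ge0..].
set s := _ / ((c + k%:R) * (k%:R + 1)).
have -> : `|hypF_coef a b c k| * s / e k.+1 = `|hypF_coef a b c k| / e k * (s * (e k / e k.+1)).
  by field; rewrite !gt_eqF.
rewrite ler_wpM2l ?divr_ge0 ?(ltW (e0 k)) // ratio //; near: k; [exact: nbhs_infty_gt|exact: add_ge0..].
Unshelve. all: by end_near.
Qed.
Lemma hypF_coef_dominated_negpow a b c p : a + b = c + p -> 1 <= c -> 0 < p ->
  exists M, 0 <= M /\ forall k, `|hypF_coef a b c k| <= M * negpow_coef p k.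
Proof.
move=> abcp c1 p0.
apply: (@hypF_coef_dominated _ _ _ `|a * b - c * p|) => [|k|//|k k0 ak bk].
- by apply: lt_le_trans c1.
- exact: negpow_coef_gt0.
have k1 : 1 <= k%:R :> R by rewrite ler1n.
have ek := negpow_coef_gt0 k p0.
rewrite negpow_coefS.
have -> : (a + k%:R) * (b + k%:R) / ((c + k%:R) * (k%:R + 1))
    * (negpow_coef p k / (negpow_coef p k * ((p + k%:R) / k.+1%:R)))
    = (a + k%:R) * (b + k%:R) / ((c + k%:R) * (p + k%:R)).
  rewrite -natr1; field; rewrite !gt_eqF //; lra.
apply: (ratio_le_1_add (w := 1)); rewrite ?mulr1 //; [lra|nra|].
have -> : (a + k%:R) * (b + k%:R) = (c + k%:R) * (p + k%:R) + (a * b - c * p).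
  by rewrite (_ : b = c + p - a); [ring | lra].
by rewrite lerD2l ler_norm.
Qed.

Lemma hypF_coef_dominated_beta a b c q : a + b = c - q -> 0 < c -> 0 <= q ->
  exists M, 0 <= M /\ forall k, `|hypF_coef a b c k| <= M * beta_coef q k.
Proof.
move=> abcq c0 q0; set L := (c - q) * (2 + q) + a * b - 2 * c - 1.
set K := a * b * (2 + q) - c.
apply: (@hypF_coef_dominated _ _ _ (`|L| + `|K|)) => [//|k||k k0 ak bk].
- exact: beta_coef_gt0.
- by rewrite addr_ge0.
have k1 : 1 <= k%:R :> R by rewrite ler1n.
have ek := beta_coef_gt0 k q0.
rewrite beta_coefS //.
have -> : (a + k%:R) * (b + k%:R) / ((c + k%:R) * (k%:R + 1))
    * (beta_coef q k / (beta_coef q k * (k.+1%:R / (q + 2 + k%:R))))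
    = (a + k%:R) * (b + k%:R) * (q + 2 + k%:R) / ((c + k%:R) * (k%:R + 1) * (k%:R + 1)).
  rewrite -natr1; field; rewrite !gt_eqF //; lra.
apply: (ratio_le_1_add (w := k%:R + 1)) => //; [lra|nra|].
have -> : (a + k%:R) * (b + k%:R) * (q + 2 + k%:R)
    = (c + k%:R) * (k%:R + 1) * (k%:R + 1) + (L * k%:R + K).
  by rewrite /L /K (_ : b = c - q - a); [ring | lra].
rewrite lerD2l.
have Lk : L * k%:R <= `|L| * k%:R by rewrite ler_wpM2r ?ler_norm.
have Kk : 0 <= `|K| * k%:R by rewrite mulr_ge0.
have := ler_norm K; have := normr_ge0 L; lra.
Qed.

End hypergeometric_coefficients.

Section hypergeometric_bounds.
Context {R : realType}.
Implicit Types (a b c p q x : R).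

Lemma limn_series_le (u v : nat -> R) (B : R) :
  (forall k, `|u k| <= v k) -> (forall N, \sum_(k < N) v k <= B) ->
  limn (series u) <= B.
Proof.
move=> uv vB; have uB N : \sum_(k < N) `|u k| <= B.
  by apply: le_trans (vB N); apply: ler_sum => k _.
have cvg_u : cvgn (series u).
  apply: normed_cvg; apply: nondecreasing_is_cvgn.
    by apply: nondecreasing_series => k _ /=.
  exists B => _ [N _ <-].
  by change (series (fun k => `|u k|) N <= B); rewrite seriesEord /=; exact: uB.
apply: limr_le => //; near=> N; rewrite seriesEord /=.
by apply: le_trans (uB N); apply: le_trans (ler_norm _) (ler_norm_sum _ _ _).
Unshelve. all: by end_near.
Qed.

Lemma hypF_le_dominated a b c x (e : nat -> R) (M B : R) : 0 <= M -> 0 <= x ->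
  (forall k, `|hypF_coef a b c k| <= M * e k) ->
  (forall N, \sum_(k < N) e k * x ^+ k <= B) -> hypF a b c x <= M * B.
Proof.
move=> M0 x0 dom sumB; apply: (@limn_series_le _ (fun k => M * (e k * x ^+ k))).
  move=> k; rewrite normrM (ger0_norm (exprn_ge0 _ x0)) mulrA.
  rewrite ler_wpM2r ?exprn_ge0 //; exact: (dom k).
by move=> N; rewrite -mulr_sumr ler_wpM2l.
Qed.

Lemma hypF_le_negpow a b c p : a + b = c + p -> 1 <= c -> 0 < p ->
  exists M, 0 <= M /\ forall x, 0 <= x < 1 -> hypF a b c x <= M * (1 - x) `^ (- p).
Proof.
move=> abcp c1 p0; have [M [M0 dom]] := hypF_coef_dominated_negpow abcp c1 p0.
exists M; split => // x /andP[x0 x1]; apply: hypF_le_dominated dom _ => // N.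
by apply: negpow_partial_le; rewrite ?x0 ?x1 ?ltW.
Qed.

Lemma hypF_le_log a b c : a + b = c -> 0 < c ->
  exists M, 0 <= M /\ forall x, 0 < x < 1 -> hypF a b c x <= M * (- ln (1 - x) / x).
Proof.
move=> abc c0; have abc0 : a + b = c - 0 by rewrite subr0.
have [M [M0 dom]] := hypF_coef_dominated_beta abc0 c0 (lexx 0).
exists M; split => // x /andP[x0 x1]; apply: hypF_le_dominated dom _ => // [|N]; first exact: ltW.
rewrite mulrC ler_pdivlMl // mulr_sumr.
under eq_bigr do rewrite beta_coef0 mulrCA -exprS.
by apply: log_partial_le; rewrite ltW ?x1.
Qed.

Lemma hypF_le_bounded a b c q : a + b = c - q -> 0 < c -> 0 < q ->
  exists M, 0 <= M /\ forall x, 0 <= x < 1 -> hypF a b c x <= M.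
Proof.
move=> abcq c0 q0; have [M [M0 dom]] := hypF_coef_dominated_beta abcq c0 (ltW q0).
exists (M * q^-1); split => [|x /andP[x0 x1]]; first by rewrite mulr_ge0 // invr_ge0 ltW.
apply: hypF_le_dominated dom _ => // N; apply: le_trans (sum_beta_coef_le N q0).
apply: ler_sum => k _; rewrite ler_piMr ?exprn_ile1 ?(ltW x1) //.
exact/ltW/beta_coef_gt0/ltW.
Qed.

End hypergeometric_bounds.

Section elementary_bounds.
Context {R : realType}.

Lemma Gamma_ge0 (s : R) : 0 <= Gamma s.
Proof.
rewrite /Gamma /Rintegral; apply/fine_ge0/integral_ge0 => t _.
by rewrite lee_fin mulr_ge0 ?powR_ge0 ?expR_ge0.
Qed.

Lemma powR_1_subX2_le (r s : R) : 0 <= r <= 1 ->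
  (1 - r ^+ 2) `^ s <= (1 + 2 `^ s) * (1 - r) `^ s.
Proof.
move=> /andP[r0 r1].
rewrite (_ : 1 - r ^+ 2 = (1 + r) * (1 - r)); last by ring.
rewrite powRM ?ler_wpM2r ?powR_ge0 //; try lra.
have [s0|s0] := leP 0 s.
  have : (1 + r) `^ s <= 2 `^ s by rewrite ge0_ler_powR ?nnegrE //; lra.
  by have := powR_ge0 1 s; lra.
have : (1 + r) `^ s <= 1 by rewrite -[X in _ <= X](powRr0 (1 + r)) ler_powR //; lra.
by have := powR_ge0 2 s; lra.
Qed.

Lemma neg_ln_1_subX2_le (r : R) : 1 / 2 < r < 1 ->
  - ln (1 - r ^+ 2) / r ^+ 2 <= 4 * ln (1 / (1 - r)).
Proof.
move=> /andP[r12 r1]; have x0 : 0 < r ^+ 2 by rewrite exprn_gt0 //; lra.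
have x4 : 1 <= 4 * r ^+ 2 by nra.
have r0 : 0 <= r by lra.
have xr : 1 - r <= 1 - r ^+ 2 by nra.
have lnx : - ln (1 - r ^+ 2) <= ln (1 / (1 - r)).
  rewrite -lnV ?posrE ?subr_gt0 ?expr_lt1 // div1r.
  by rewrite ler_ln ?posrE ?invr_gt0 ?subr_gt0 ?expr_lt1 // lef_pV2 ?posrE ?subr_gt0 ?expr_lt1.
have lnx0 : 0 <= - ln (1 - r ^+ 2) by rewrite oppr_ge0 ln_le0 // gerBl ltW.
rewrite ler_pdivrMr //; nra.
Qed.

End elementary_bounds.

Definition d_ab_rate {R : realType} (alpha beta t : R) :=
  if 1 < alpha then t `^ beta
  else if alpha == 1 then t `^ beta * ln (1 / t)
  else t `^ (alpha + beta - 1).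

Section d_ab_bounds.
Context {R : realType}.
Variables (n : nat) (alpha beta : R).
Hypothesis n2 : (2 <= n)%N.

Lemma enorm_ge0 (xi : 'rV[R]_n) : 0 <= enorm xi.
Proof. exact: sqrtr_ge0. Qed.

Lemma d_ab_le_hypF : exists Kn, 0 <= Kn /\ forall (xi : 'rV[R]_n) (B : R),
  hypF ((n%:R + alpha) / 2 - 1) (alpha / 2) (n%:R / 2) (enorm xi ^+ 2) <= B ->
  d_ab n alpha beta xi <= Kn * ((1 - enorm xi ^+ 2) `^ (alpha + beta - 1) * B).
Proof.
exists (pi `^ (n%:R / 2) * 2 `^ (1 - beta) / Gamma (n%:R / 2 : R)); split.
  by rewrite divr_ge0 ?mulr_ge0 ?powR_ge0 ?Gamma_ge0.
move=> xi B FB; rewrite /d_ab -mulrA ler_wpM2l ?ler_wpM2l ?powR_ge0 //.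
by rewrite divr_ge0 ?mulr_ge0 ?powR_ge0 ?Gamma_ge0.
Qed.

Let c0 : 0 < n%:R / 2 :> R.
Proof. by rewrite divr_gt0 // ltr0n (leq_trans _ n2). Qed.

Let c1 : 1 <= n%:R / 2 :> R.
Proof. by rewrite ler_pdivlMr // mul1r (ler_nat R 2). Qed.

Lemma d_ab_le_alpha_gt1 : 1 < alpha ->
  exists K, 0 <= K /\ forall xi : 'rV[R]_n, enorm xi < 1 ->
    d_ab n alpha beta xi <= K * (1 - enorm xi) `^ beta.
Proof.
move=> alpha1; have abc : (n%:R + alpha) / 2 - 1 + alpha / 2 = n%:R / 2 + (alpha - 1).
  by field.
have p0 : 0 < alpha - 1 by rewrite subr_gt0.
have [M [M0 FM]] := hypF_le_negpow abc c1 p0.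
have [Kn [Kn0 dK]] := d_ab_le_hypF.
exists (Kn * M * (1 + 2 `^ beta)); split => [|xi r1].
  by rewrite !mulr_ge0 ?addr_ge0 ?powR_ge0.
have r0 := enorm_ge0 xi; have x1 : enorm xi ^+ 2 < 1 by rewrite expr_lt1.
apply: le_trans (dK _ _ (FM _ _)) _; first by rewrite exprn_ge0.
rewrite [_ * (M * _)]mulrCA -powRD; last first.
  by apply/implyP => _; rewrite subr_eq0 eq_sym lt_eqF.
rewrite (_ : alpha + beta - 1 - (alpha - 1) = beta); last by ring.
rewrite -!mulrA ler_wpM2l // ler_wpM2l //.
by apply: powR_1_subX2_le; rewrite r0 ltW.
Qed.

Lemma d_ab_le_alpha_lt1 : alpha < 1 ->
  exists K, 0 <= K /\ forall xi : 'rV[R]_n, enorm xi < 1 ->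
    d_ab n alpha beta xi <= K * (1 - enorm xi) `^ (alpha + beta - 1).
Proof.
move=> alpha1; have abc : (n%:R + alpha) / 2 - 1 + alpha / 2 = n%:R / 2 - (1 - alpha).
  by field.
have q0 : 0 < 1 - alpha by rewrite subr_gt0.
have [M [M0 FM]] := hypF_le_bounded abc c0 q0.
have [Kn [Kn0 dK]] := d_ab_le_hypF.
exists (Kn * M * (1 + 2 `^ (alpha + beta - 1))); split => [|xi r1].
  by rewrite !mulr_ge0 ?addr_ge0 ?powR_ge0.
have r0 := enorm_ge0 xi; have x1 : enorm xi ^+ 2 < 1 by rewrite expr_lt1.
apply: le_trans (dK _ _ (FM _ _)) _; first by rewrite exprn_ge0.
rewrite [X in Kn * X <= _]mulrC -!mulrA ler_wpM2l // ler_wpM2l //.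
by apply: powR_1_subX2_le; rewrite r0 ltW.
Qed.

Lemma d_ab_le_alpha_eq1 : alpha = 1 ->
  exists K, 0 <= K /\ forall xi : 'rV[R]_n, 1 / 2 < enorm xi < 1 ->
    d_ab n alpha beta xi <= K * ((1 - enorm xi) `^ beta * ln (1 / (1 - enorm xi))).
Proof.
move=> alpha1; have abc : (n%:R + alpha) / 2 - 1 + alpha / 2 = n%:R / 2.
  by rewrite alpha1; field.
have [M [M0 FM]] := hypF_le_log abc c0.
have [Kn [Kn0 dK]] := d_ab_le_hypF.
exists (Kn * M * 4 * (1 + 2 `^ beta)); split => [|xi /andP[r12 r1]].
  by rewrite !mulr_ge0 ?addr_ge0 ?powR_ge0.
have r0 := enorm_ge0 xi; have x1 : enorm xi ^+ 2 < 1 by rewrite expr_lt1.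
have x0 : 0 < enorm xi ^+ 2 by rewrite exprn_gt0 //; lra.
have F4 : - ln (1 - enorm xi ^+ 2) / enorm xi ^+ 2 <= 4 * ln (1 / (1 - enorm xi)).
  by apply: neg_ln_1_subX2_le; rewrite r12.
have L0 : 0 <= ln (1 / (1 - enorm xi)).
  by rewrite ln_ge0 // ler_pdivlMr ?mul1r ?subr_gt0 // gerBl.
apply: le_trans (dK _ _ (le_trans (FM _ _) (ler_wpM2l M0 F4))) _; first by rewrite x0.
rewrite alpha1 (_ : 1 + beta - 1 = beta); last by ring.
rewrite -!mulrA ler_wpM2l // mulrCA ler_wpM2l // mulrCA ler_wpM2l //.
by rewrite mulrA ler_wpM2r // powR_1_subX2_le // r0 ltW.
Qed.

End d_ab_bounds.

Lemma d_ab_rate_ge0 {R : realType} (alpha beta t : R) : 0 < t <= 1 ->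
  0 <= d_ab_rate alpha beta t.
Proof.
move=> /andP[t0 t1]; rewrite /d_ab_rate.
case: ifP => _; first exact: powR_ge0.
case: ifP => _; last exact: powR_ge0.
by rewrite mulr_ge0 ?powR_ge0 // ln_ge0 // ler_pdivlMr // mul1r.
Qed.

Theorem lemma2p7 (R : realType) (n : nat) (alpha beta : R) :
  (3 <= n)%N ->
  0 <= beta ->
  0 < alpha + beta ->
  alpha + beta < n%:R - beta ->
  (n%:R - alpha - 2 * beta) / (2 * n%:R) + (n%:R - alpha) / (2 * (n%:R - 1)) < 1 ->
  exists C : R, 0 < C /\ exists delta : R, 0 < delta /\
    forall xi : 'rV[R]_n,
      enorm xi < 1 -> 1 - delta < enorm xi ->
      d_ab n alpha beta xi <=
        C * (if 1 < alpha then (1 - enorm xi) `^ beta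
             else if alpha == 1 then (1 - enorm xi) `^ beta * ln (1 / (1 - enorm xi))
             else (1 - enorm xi) `^ (alpha + beta - 1)).
Proof.
move=> /ltnW n2 _ _ _ _.
suff [K [K0 dK]] : exists K, 0 <= K /\ forall xi : 'rV[R]_n, 1 / 2 < enorm xi < 1 ->
    d_ab n alpha beta xi <= K * d_ab_rate alpha beta (1 - enorm xi).
  exists (K + 1); split; first lra.
  exists (1 / 2); split => [|xi r1 r12]; first lra.
  have rate0 : 0 <= d_ab_rate alpha beta (1 - enorm xi).
    by apply: d_ab_rate_ge0; rewrite subr_gt0 r1 gerBl enorm_ge0.
  apply: le_trans (dK xi _) (ler_wpM2r rate0 _); last lra.
  by rewrite r1 andbT; lra.
rewrite /d_ab_rate; case: ltgtP => [alpha1|alpha1|alpha1].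
- have [K [K0 dK]] := d_ab_le_alpha_gt1 beta n2 alpha1.
  by exists K; split => // xi /andP[_ r1]; apply: dK.
- have [K [K0 dK]] := d_ab_le_alpha_lt1 beta n2 alpha1.
  by exists K; split => // xi /andP[_ r1]; apply: dK.
- exact: d_ab_le_alpha_eq1 beta n2 (esym alpha1).
Qed.
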